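(* Every integer $n\geq 3$ with $n\neq 5$ and $n\not\equiv 0\pmod 4$ can be written as a sum of four squares of coprime integers, at most one of which is zero. *)

From mathcomp Require Import all_boot all_order all_algebra.
Set Implicit Arguments. Unset Strict Implicit. Unset Printing Implicit Defensive.
Import Order.TTheory GRing.Theory Num.Theory.

(* Every prime p is a sum of four squares by Lagrange's descent: Euler's pigeonhole
   argument gives p | x^2 + y^2 + 1 with x, y <= p/2, so m p is a sum of four squares
   with 0 < m < p; reducing the four numbers to residues of absolute value at most m/2
   and dividing the four-square identity by m^2 yields a smaller such m.
   An odd prime factor p = |y|^2 is adjoined to a primitive representation |x|^2 of
   n/p by one of the quaternion products x * conj y and x * y: if p divided all
   coordinates of both, it would divide their sum 2 y0 x.  The map
   (a, b, c, d) |-> (a - b, a + b, c - d, c + d) doubles a primitive representation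
   of an odd number, which covers n = 2 (mod 4).
   A primitive representation with two zeros is n = s^2 + t^2 with s, t coprime.  One
   of s, t, s - t, s + t is a multiple of 3, and the identities
     (3k)^2 + t^2 = t^2 + (2k)^2 + (2k)^2 + k^2,
     (t + 3k)^2 + t^2 = (t + 2k)^2 + (2k)^2 + (t + k)^2 + 0^2
   give primitive representations with at most one zero unless n is 1, 2 or 5. *)

From mathcomp Require Import all_boot all_order all_algebra.
From mathcomp Require Import zify ring.
Import Order.TTheory GRing.Theory Num.Theory.

(** * Sums of four squares of primes *)

Lemma sqr_modn_inj [p x y : nat] : prime p -> (x <= p./2)%N -> (y <= p./2)%N ->
  x ^ 2 = y ^ 2 %[mod p] -> x = y.
Proof.
rewrite !geq_half_double -!muln2 => pp.
wlog le_yx : x y / (y <= x)%N => [hwlog|] hx hy eq_sq.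
  by case/orP: (leq_total y x) => le; [|apply/esym]; apply: hwlog.
have : (p %| (x - y) * (x + y))%N.
  by rewrite -subn_sqr -eqn_mod_dvd ?leq_exp2r //; apply/eqP.
by rewrite Euclid_dvdM // => /orP[] /dvdn_leq; lia.
Qed.

Lemma exists_sqr_sum_dvd [p : nat] : prime p ->
  exists x y : nat, [/\ (x <= p./2)%N, (y <= p./2)%N & (p %| x ^ 2 + y ^ 2 + 1)%N].
Proof.
move=> pp; have p_gt0 := prime_gt0 pp.
set h := p./2; set S := iota 0 h.+1.
set sq := [seq x ^ 2 %% p | x <- S]; set nsq := [seq p.-1 - y ^ 2 %% p | y <- S].
have le_h x : x \in S -> (x <= h)%N by rewrite mem_iota.
have : ~~ uniq (sq ++ nsq).
  have sub : {subset sq ++ nsq <= iota 0 p}.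
    move=> z; rewrite mem_cat mem_iota /= => /orP[] /mapP[x _ ->]; first exact: ltn_pmod.
    lia.
  apply/negP => /uniq_leq_size /(_ sub).
  by rewrite size_cat !size_map !size_iota addnn leqNgt -ltn_half_double ltnSn.
have inj_sq : {in S &, injective (fun x => x ^ 2 %% p)}.
  by move=> x y /le_h hx /le_h hy; apply: sqr_modn_inj.
have inj_nsq : {in S &, injective (fun y => p.-1 - y ^ 2 %% p)}.
  move=> x y Sx Sy /= eq_nsq; apply: inj_sq => //; move: eq_nsq.
  have := ltn_pmod (x ^ 2) p_gt0; have := ltn_pmod (y ^ 2) p_gt0; lia.
rewrite cat_uniq !map_inj_in_uniq // iota_uniq andbT negbK.
case/hasP => _ /mapP[y Sy ->] /mapP[x Sx] eq_mod.
exists x, y; split; rewrite ?le_h //.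
rewrite /dvdn -addnA -modnDml -eq_mod.
have -> : (p.-1 - y ^ 2 %% p + (y ^ 2 + 1) = (y ^ 2 %/ p).+1 * p)%N.
  have := divn_eq (y ^ 2) p; have := ltn_pmod (y ^ 2) p_gt0; lia.
by rewrite modnMl.
Qed.

Local Open Scope ring_scope.

Definition sumsq (s : seq int) : int := \sum_(x <- s) x ^+ 2.

Lemma sumsq4 (a b c d : int) :
  sumsq [:: a; b; c; d] = a ^+ 2 + b ^+ 2 + c ^+ 2 + d ^+ 2.
Proof. by rewrite /sumsq !big_cons big_nil addr0 !addrA. Qed.

Lemma sumsq_ge0 (s : seq int) : 0 <= sumsq s.
Proof. by apply: sumr_ge0 => x _; apply: sqr_ge0. Qed.

Lemma sumsq_eq0 (s : seq int) : (sumsq s == 0) = all (fun x => x == 0) s.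
Proof.
rewrite psumr_eq0 => [|x _]; last exact: sqr_ge0.
by apply: eq_all => x; rewrite sqrf_eq0.
Qed.

Lemma dvdz_sumsq [d : int] [s : seq int] :
  all (fun x => (d %| x)%Z) s -> (d ^+ 2 %| sumsq s)%Z.
Proof.
rewrite /sumsq; elim: s => [|x s IHs]; first by rewrite big_nil dvdz0.
by rewrite big_cons /= => /andP[dx /IHs ds]; rewrite rpredD ?dvdz_exp2r.
Qed.

(* The coordinates of the quaternion product [x * conj y], up to the signs of the
   last three. *)
Definition quat_mul_conj (x0 x1 x2 x3 y0 y1 y2 y3 : int) : seq int :=
  [:: x0 * y0 + x1 * y1 + x2 * y2 + x3 * y3; x0 * y1 - x1 * y0 + x2 * y3 - x3 * y2;
      x0 * y2 - x1 * y3 - x2 * y0 + x3 * y1; x0 * y3 + x1 * y2 - x2 * y1 - x3 * y0].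

Lemma sumsq_quat_mul_conj (x0 x1 x2 x3 y0 y1 y2 y3 : int) :
  sumsq (quat_mul_conj x0 x1 x2 x3 y0 y1 y2 y3) =
  sumsq [:: x0; x1; x2; x3] * sumsq [:: y0; y1; y2; y3].
Proof. by rewrite !sumsq4; ring. Qed.

Definition centered (M y : int) : bool := - M <= 2 * y < M.

Lemma exists_centered_mod (x : int) [M : int] : 0 < M -> exists c, centered M (x - M * c).
Proof.
move=> M_gt0; exists ((2 * x + M) %/ (2 * M))%Z.
have M2_neq0 : 2 * M != 0 by rewrite mulf_neq0 ?gt_eqF.
have := divz_eq (2 * x + M) (2 * M); have := modz_ge0 (2 * x + M) M2_neq0.
have := ltz_pmod (2 * x + M) (mulr_gt0 (isT : 0 < 2 :> int) M_gt0).
rewrite /centered; move: ((2 * x + M) %/ (2 * M))%Z ((2 * x + M) %% (2 * M))%Z => q r; lia.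
Qed.

(* The [w]'s are the coordinates of [quat_mul_conj x (x - M c)] divided by [M]. *)
Lemma sumsq_reduce [M P x0 x1 x2 x3 : int] :
  M != 0 -> M * P = sumsq [:: x0; x1; x2; x3] -> forall c0 c1 c2 c3 : int,
  exists r w0 w1 w2 w3,
    sumsq [:: x0 - M * c0; x1 - M * c1; x2 - M * c2; x3 - M * c3] = M * r
    /\ r * P = sumsq [:: w0; w1; w2; w3].
Proof.
move=> M_neq0 hx c0 c1 c2 c3.
set xc := x0 * c0 + x1 * c1 + x2 * c2 + x3 * c3.
set r := P - 2 * xc + M * sumsq [:: c0; c1; c2; c3].
have Er : sumsq [:: x0 - M * c0; x1 - M * c1; x2 - M * c2; x3 - M * c3] = M * r.
  by rewrite /r /xc mulrDr mulrBr hx !sumsq4; ring.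
exists r, (P - xc), (x1 * c0 - x0 * c1 + x3 * c2 - x2 * c3),
  (x2 * c0 + x1 * c3 - x0 * c2 - x3 * c1), (x3 * c0 - x1 * c2 + x2 * c1 - x0 * c3).
split=> //; apply: (mulfI (expf_neq0 2 M_neq0)).
have -> : M ^+ 2 * (r * P) = (M * P) * (M * r) by ring.
rewrite hx -Er -sumsq_quat_mul_conj /quat_mul_conj.
have -> : x0 * (x0 - M * c0) + x1 * (x1 - M * c1) + x2 * (x2 - M * c2) +
    x3 * (x3 - M * c3) = M * (P - xc).
  by rewrite [RHS]mulrBr hx sumsq4 /xc; ring.
by rewrite !sumsq4; ring.
Qed.

Lemma centered_sqr_leif [M y : int] :
  centered M y -> 4 * y ^+ 2 <= M ^+ 2 ?= iff (2 * y == - M).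
Proof.
move=> /andP[lo hi]; rewrite (_ : 4 * y ^+ 2 = (2 * y) ^+ 2); last by ring.
split; first nia.
by apply/eqP/eqP => [|->]; [nia | rewrite sqrrN].
Qed.

Lemma centered_sumsq_leif [M : int] [s : seq int] : all (centered M) s ->
  4 * sumsq s <= M ^+ 2 *+ size s ?= iff all (fun y => 2 * y == - M) s.
Proof.
rewrite /sumsq; elim: s => [|y s IHs]; first by rewrite big_nil mulr0; apply/leif_refl.
rewrite big_cons mulrDr [_ *+ size _]mulrS => /andP[cy /IHs].
exact: leifD (centered_sqr_leif cy).
Qed.

Lemma sqr_dvdz_sumsq4_half [M y : int] (c0 c1 c2 c3 : int) : 2 * y = - M ->
  (M ^+ 2 %| sumsq [:: y + M * c0; y + M * c1; y + M * c2; y + M * c3])%Z.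
Proof.
move=> yM; have -> : M = 2 * (- y) by lia.
apply/dvdzP; exists (sumsq [:: c0; c1; c2; c3] - (c0 + c1 + c2 + c3) + 1).
by rewrite !sumsq4; ring.
Qed.

Lemma centered_sumsq4_quotient [M r y0 y1 y2 y3 : int] (c0 c1 c2 c3 : int) :
  0 < M -> all (centered M) [:: y0; y1; y2; y3] -> sumsq [:: y0; y1; y2; y3] = M * r ->
  ~~ (M ^+ 2 %| sumsq [:: y0 + M * c0; y1 + M * c1; y2 + M * c2; y3 + M * c3])%Z ->
  0 < r < M.
Proof.
move=> M_gt0 centered_y Er M2_ndvd.
have r_neq0 : r != 0.
  apply: contraNneq M2_ndvd => r0.
  have : all (fun y => y == 0) [:: y0; y1; y2; y3] by rewrite -sumsq_eq0 Er r0 mulr0.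
  case/and5P=> /eqP-> /eqP-> /eqP-> /eqP-> _; rewrite !add0r.
  by apply: dvdz_sumsq; rewrite /= !dvdz_mulr.
have [le_sumsq eq_sumsq] := centered_sumsq_leif centered_y; rewrite Er in le_sumsq eq_sumsq.
have r_neqM : r != M.
  apply: contraNneq M2_ndvd => rM.
  move: eq_sumsq; rewrite rM (_ : 4 * (M * M) = M ^+ 2 *+ 4); last by ring.
  rewrite eqxx => /esym/and5P[/eqP e0 /eqP e1 /eqP e2 /eqP e3 _].
  rewrite (_ : y1 = y0) 1?(_ : y2 = y0) 1?(_ : y3 = y0); try lia.
  exact: sqr_dvdz_sumsq4_half.
have r_ge0 : 0 <= r by rewrite -(pmulr_rge0 _ M_gt0) -Er sumsq_ge0.
have r_le : r <= M by rewrite -(ler_pM2l M_gt0); move: le_sumsq => /=; rewrite -mulr_natr; lia.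
lia.
Qed.

Lemma descent_step [M P x0 x1 x2 x3 : int] :
  1 < M -> ~~ (M %| P)%Z -> M * P = sumsq [:: x0; x1; x2; x3] ->
  exists r w0 w1 w2 w3, 0 < r < M /\ r * P = sumsq [:: w0; w1; w2; w3].
Proof.
move=> M_gt1 M_ndvd hx; have M_gt0 : 0 < M by lia.
have [c0 h0] := exists_centered_mod x0 M_gt0.
have [c1 h1] := exists_centered_mod x1 M_gt0.
have [c2 h2] := exists_centered_mod x2 M_gt0.
have [c3 h3] := exists_centered_mod x3 M_gt0.
have [r [w0 [w1 [w2 [w3 [Er Ew]]]]]] := sumsq_reduce (lt0r_neq0 M_gt0) hx c0 c1 c2 c3.
exists r, w0, w1, w2, w3; split=> //.
apply: (centered_sumsq4_quotient c0 c1 c2 c3 M_gt0 _ Er); first by rewrite /= h0 h1 h2 h3.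
by rewrite !subrK -hx expr2 dvdz_mul2l ?gt_eqF.
Qed.

Lemma prime_sum4sq_descent [p : nat] : prime p -> forall m : nat, (0 < m < p)%N ->
  forall x0 x1 x2 x3 : int, m%:Z * p%:Z = sumsq [:: x0; x1; x2; x3] ->
  exists a b c d : int, p%:Z = sumsq [:: a; b; c; d].
Proof.
move=> pp; elim/ltn_ind=> m IHm /andP[m_gt0 m_lt_p] x0 x1 x2 x3 hx.
have [m1|m_neq1] := eqVneq m 1%N; first by exists x0, x1, x2, x3; rewrite -hx m1 mul1r.
have m_ndvd : ~~ (m%:Z %| p%:Z)%Z.
  by rewrite dvdzE /=; apply/(prime_nt_dvdP pp m_neq1)=> mp; rewrite mp ltnn in m_lt_p.
have m_gt1 : 1 < m%:Z by rewrite ltz_nat; lia.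
have [r [w0 [w1 [w2 [w3 [/andP[r_gt0 r_lt_m] hw]]]]]] := descent_step m_gt1 m_ndvd hx.
have rE : r = (`|r|%N)%:Z by rewrite abszE gtr0_norm.
apply: (IHm `|r|%N _ _ w0 w1 w2 w3); last by rewrite -rE.
  by rewrite -ltz_nat -rE.
by apply/andP; split; rewrite -ltz_nat -rE //; apply: lt_trans r_lt_m _; rewrite ltz_nat.
Qed.

Lemma prime_sum4sq [p : nat] : prime p -> exists a b c d : int, p%:Z = sumsq [:: a; b; c; d].
Proof.
move=> pp; have [x [y [hx hy /dvdnP[m hm]]]] := exists_sqr_sum_dvd pp.
move: hx hy; rewrite !geq_half_double -!muln2 => hx hy.
have p_gt1 := prime_gt1 pp.
apply: (prime_sum4sq_descent pp m _ x%:Z y%:Z 1 0).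
  by apply/andP; split; nia.
by rewrite sumsq4 -PoszM -hm; lia.
Qed.

Lemma prime_sum4sq_ndvd [p : nat] : prime p ->
  exists y0 y1 y2 y3 : int, p%:Z = sumsq [:: y0; y1; y2; y3] /\ ~~ (p %| y0)%Z.
Proof.
move=> pp; have [a [b [c [d Ep]]]] := prime_sum4sq pp; set s := [:: a; b; c; d] in Ep.
have p_gt1 := prime_gt1 pp.
have /allPn[y y_in y_neq0] : ~~ all (fun y => y == 0) s by rewrite -sumsq_eq0 -Ep; lia.
move: (size_rem y_in) (perm_to_rem y_in); case: (rem y s) => [|y1 [|y2 [|y3 []]]] // _.
move=> perm_s; rewrite /sumsq (perm_big _ perm_s) -/(sumsq _) in Ep.
exists y, y1, y2, y3; split=> //; apply/negP=> /dvdzP[k yk].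
have : y ^+ 2 <= p%:Z.
  by rewrite Ep sumsq4; have := sqr_ge0 y1; have := sqr_ge0 y2; have := sqr_ge0 y3; lia.
have : k != 0 by apply: contraNneq y_neq0 => k0; rewrite yk k0 mul0r.
rewrite yk; nia.
Qed.

(** * Primitive representations *)

Definition primitive (s : seq int) : Prop :=
  forall p : nat, prime p -> ~~ all (fun x => (p %| x)%Z) s.

Lemma Euclid_dvdzM (p : nat) (a b : int) :
  prime p -> (p %| a * b)%Z = (p %| a)%Z || (p %| b)%Z.
Proof. by move=> pp; rewrite !dvdzE abszM Euclid_dvdM. Qed.

Lemma primitiveW (s t : seq int) : primitive s ->
  (forall d : int, all (fun x => (d %| x)%Z) t -> all (fun x => (d %| x)%Z) s) ->
  primitive t.
Proof. by move=> prim_s st p pp; apply: contra (prim_s p pp); apply: st. Qed.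

Lemma primitive_common_dvdz [s : seq int] [d : int] :
  primitive s -> all (fun x => (d %| x)%Z) s -> d ^+ 2 = 1.
Proof.
move=> prim_s ds.
have [d1|[q pq qd]] : `|d|%N = 1%N \/ exists2 q : nat, prime q & (q %| d)%Z.
  case E: `|d|%N => [|[|k]]; [right; exists 2%N | by left | right; exists (pdiv k.+2)];
    by rewrite ?dvdzE ?E ?dvdn0 ?pdiv_prime ?pdiv_dvd.
  by rewrite -(@ger0_norm _ (d ^+ 2)) ?sqr_ge0 // normrX -abszE d1.
case/negP: (prim_s q pq); apply/allP=> x xs.
exact: dvdz_trans qd (allP ds x xs).
Qed.

Lemma primitive_gcdz (a b c d : int) :
  primitive [:: a; b; c; d] -> gcdz (gcdz a b) (gcdz c d) = 1.
Proof.
set g := gcdz _ _ => prim.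
have g2 : g ^+ 2 = 1.
  apply: primitive_common_dvdz prim _; rewrite /= andbT.
  apply/and4P; split.
  - exact: dvdz_trans (dvdz_gcdl _ _) (dvdz_gcdl _ _).
  - exact: dvdz_trans (dvdz_gcdl _ _) (dvdz_gcdr _ _).
  - exact: dvdz_trans (dvdz_gcdr _ _) (dvdz_gcdl _ _).
  - exact: dvdz_trans (dvdz_gcdr _ _) (dvdz_gcdr _ _).
have : 0 <= g by rewrite /g /gcdz.
nia.
Qed.

Lemma dvdz_quat_mul_conj (q x0 x1 x2 x3 y0 y1 y2 y3 : int) :
  all (fun z => (q %| z)%Z) (quat_mul_conj x0 x1 x2 x3 y0 y1 y2 y3) ->
  all (fun x => (q %| sumsq [:: y0; y1; y2; y3] * x)%Z) [:: x0; x1; x2; x3].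
Proof.
case/and5P=> h0 h1 h2 h3 _; rewrite sumsq4 /= andbT.
have comb a0 a1 a2 a3 :=
  rpredD (rpredD (rpredD (dvdz_mull a0 h0) (dvdz_mull a1 h1)) (dvdz_mull a2 h2))
    (dvdz_mull a3 h3).
have eq_dvdz (a b : int) : (q %| a)%Z -> a = b -> (q %| b)%Z by move=> ? <-.
(* The coefficients are the columns of the matrix of [x |-> quat_mul_conj x y],
   which is [sumsq y] times an orthogonal matrix. *)
apply/and4P; split.
- by apply: eq_dvdz (comb y0 y1 y2 y3) _; ring.
- by apply: eq_dvdz (comb y1 (- y0) (- y3) y2) _; ring.
- by apply: eq_dvdz (comb y2 y3 (- y0) (- y1)) _; ring.
- by apply: eq_dvdz (comb y3 (- y2) y1 (- y0)) _; ring.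
Qed.

Lemma dvdz_quat_mul_conj_pair [p : nat] [x0 x1 x2 x3 y0 y1 y2 y3 : int] :
  prime p -> odd p -> ~~ (p %| y0)%Z ->
  all (fun z => (p %| z)%Z) (quat_mul_conj x0 x1 x2 x3 y0 y1 y2 y3) ->
  all (fun z => (p %| z)%Z) (quat_mul_conj x0 x1 x2 x3 y0 (- y1) (- y2) (- y3)) ->
  all (fun x => (p %| x)%Z) [:: x0; x1; x2; x3].
Proof.
move=> pp p_odd p_ndvd_y0 /and5P[z0 z1 z2 z3 _] /and5P[u0 u1 u2 u3 _].
have p_ndvd_2y0 : ~~ (p %| 2 * y0)%Z.
  rewrite Euclid_dvdzM // negb_or p_ndvd_y0 andbT dvdzE /=.
  by apply: contraL p_odd; rewrite (dvdn_prime2 pp (isT : prime 2)) => /eqP->.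
have dvd_x (v w : int) :
    (p %| w)%Z -> w = 2 * y0 * v \/ w = - (2 * y0 * v) -> (p %| v)%Z.
  by move=> pw [wE|wE]; move: pw; rewrite wE ?rpredN Euclid_dvdzM // (negbTE p_ndvd_2y0).
apply/and5P; split=> //.
- by apply: (dvd_x _ _ (rpredD z0 u0)); left; ring.
- by apply: (dvd_x _ _ (rpredD z1 u1)); right; ring.
- by apply: (dvd_x _ _ (rpredD z2 u2)); right; ring.
- by apply: (dvd_x _ _ (rpredD z3 u3)); right; ring.
Qed.

Lemma prime_dvdz_quat_mul_conj [p q : nat] [x0 x1 x2 x3 y0 y1 y2 y3 : int] :
  prime p -> prime q -> primitive [:: x0; x1; x2; x3] ->
  sumsq [:: y0; y1; y2; y3] = p%:Z ->
  all (fun z => (q %| z)%Z) (quat_mul_conj x0 x1 x2 x3 y0 y1 y2 y3) -> q = p.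
Proof.
move=> pp pq prim_x Ny /dvdz_quat_mul_conj; rewrite Ny => qx.
suff : (q %| p%:Z)%Z by rewrite dvdzE /= dvdn_prime2 // => /eqP.
apply: contraR (prim_x q pq) => q_ndvd; apply/allP=> x xs.
by move/allP/(_ x xs): qx; rewrite Euclid_dvdzM // (negbTE q_ndvd).
Qed.

Lemma primitive_mul_odd_prime [p : nat] [x0 x1 x2 x3 : int] :
  prime p -> odd p -> primitive [:: x0; x1; x2; x3] ->
  exists a b c d : int, sumsq [:: x0; x1; x2; x3] * p%:Z = sumsq [:: a; b; c; d]
    /\ primitive [:: a; b; c; d].
Proof.
move=> pp p_odd prim_x.
have [y0 [y1 [y2 [y3 [/esym Ny p_ndvd_y0]]]]] := prime_sum4sq_ndvd pp.
have Ny' : sumsq [:: y0; - y1; - y2; - y3] = p%:Z by rewrite -Ny !sumsq4 !sqrrN.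
have prim_or_dvd y1' y2' y3' : sumsq [:: y0; y1'; y2'; y3'] = p%:Z ->
    let z := quat_mul_conj x0 x1 x2 x3 y0 y1' y2' y3' in
    primitive z \/ all (fun z => (p %| z)%Z) z.
  move=> Ny'' z; case: (boolP (all _ z)) => [|p_ndvd]; [by right | left].
  move=> q pq; apply: contra p_ndvd => qz.
  by rewrite -(prime_dvdz_quat_mul_conj pp pq prim_x Ny'' qz).
suff [y1' [y2' [y3' [Ny'' prim]]]] : exists y1' y2' y3',
    sumsq [:: y0; y1'; y2'; y3'] = p%:Z /\
    primitive (quat_mul_conj x0 x1 x2 x3 y0 y1' y2' y3').
  do 4 eexists; split; last exact: prim.
  by rewrite -Ny'' -sumsq_quat_mul_conj.
case: (prim_or_dvd _ _ _ Ny) => [prim|]; first by exists y1, y2, y3.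
case: (prim_or_dvd _ _ _ Ny') => [prim|]; first by exists (- y1), (- y2), (- y3).
move=> dvd_u dvd_z; case/negP: (prim_x p pp).
exact: dvdz_quat_mul_conj_pair pp p_odd p_ndvd_y0 dvd_z dvd_u.
Qed.

Lemma odd_primitive_sum4sq [n : nat] : odd n ->
  exists a b c d : int, n%:Z = sumsq [:: a; b; c; d] /\ primitive [:: a; b; c; d].
Proof.
elim/ltn_ind: n => n IHn n_odd.
have [->|n_neq1] := eqVneq n 1%N.
  exists 1, 0, 0, 0; split; first by rewrite sumsq4; ring.
  by move=> q pq; rewrite /= dvdzE /= dvdn1 (gtn_eqF (prime_gt1 pq)).
have n_gt1 : (1 < n)%N by case: n n_odd n_neq1 {IHn} => [|[]].
have pp := pdiv_prime n_gt1; set p := pdiv n in pp.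
set k := (n %/ p)%N; have nE : n = (k * p)%N by rewrite divnK ?pdiv_dvd.
have /andP[k_odd p_odd] : odd k && odd p by rewrite -oddM -nE.
have k_lt_n : (k < n)%N by have := prime_gt1 pp; rewrite nE; nia.
have [x0 [x1 [x2 [x3 [Ek prim_x]]]]] := IHn k k_lt_n k_odd.
have [a [b [c [d [Ep prim]]]]] := primitive_mul_odd_prime pp p_odd prim_x.
by exists a, b, c, d; rewrite nE PoszM Ek.
Qed.

Lemma primitive_double (x0 x1 x2 x3 : int) :
  primitive [:: x0; x1; x2; x3] -> ~~ (2 %| sumsq [:: x0; x1; x2; x3])%Z ->
  primitive [:: x0 - x1; x0 + x1; x2 - x3; x2 + x3].
Proof.
move=> prim_x odd_x q pq; apply/negP=> /[dup] dvd_all /and5P[d0 d1 d2 d3 _].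
have [q2|q_neq2] := eqVneq q 2%N.
  case/negP: odd_x; move: (dvdz_sumsq dvd_all); rewrite q2.
  have -> : sumsq [:: x0 - x1; x0 + x1; x2 - x3; x2 + x3] = 2 * sumsq [:: x0; x1; x2; x3].
    by rewrite !sumsq4; ring.
  by rewrite expr2 dvdz_mul2l.
have dvd2 (v : int) : (q %| 2 * v)%Z -> (q %| v)%Z.
  by rewrite Euclid_dvdzM // dvdzE /= (dvdn_prime2 pq (isT : prime 2)) (negbTE q_neq2).
case/negP: (prim_x q pq); apply/and5P; split=> //; apply: dvd2.
- by rewrite (_ : 2 * x0 = (x0 - x1) + (x0 + x1)); [exact: rpredD | ring].
- by rewrite (_ : 2 * x1 = (x0 + x1) - (x0 - x1)); [exact: rpredB | ring].
- by rewrite (_ : 2 * x2 = (x2 - x3) + (x2 + x3)); [exact: rpredD | ring].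
- by rewrite (_ : 2 * x3 = (x2 + x3) - (x2 - x3)); [exact: rpredB | ring].
Qed.

Lemma primitive_sum4sq [n : nat] : ~~ (4 %| n)%N ->
  exists a b c d : int, n%:Z = sumsq [:: a; b; c; d] /\ primitive [:: a; b; c; d].
Proof.
move=> n_ndvd4; have [|n_even] := boolP (odd n); first exact: odd_primitive_sum4sq.
have nE : n = (n./2).*2 by rewrite -[LHS]odd_double_half (negbTE n_even).
have half_odd : odd n./2.
  apply: contraR n_ndvd4 => half_even.
  by rewrite nE -[n./2]odd_double_half (negbTE half_even) -!muln2 -mulnA dvdn_mull.
have [x0 [x1 [x2 [x3 [Ehalf prim_x]]]]] := odd_primitive_sum4sq half_odd.
exists (x0 - x1), (x0 + x1), (x2 - x3), (x2 + x3); split.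
  by rewrite nE -muln2 PoszM Ehalf !sumsq4; ring.
by apply: primitive_double prim_x _; rewrite -Ehalf dvdzE /= dvdn2 half_odd.
Qed.

(** * Representations with at most one zero *)

Definition admissible_sum4sq (n : int) : Prop :=
  exists a b c d : int, [/\ n = sumsq [:: a; b; c; d], primitive [:: a; b; c; d]
    & (count (fun x : int => x == 0) [:: a; b; c; d] <= 1)%N].

Lemma dvd3_cases (s t : int) :
  [|| (3 %| s)%Z, (3 %| t)%Z, (3 %| s - t)%Z | (3 %| s + t)%Z].
Proof.
have mod3E x : (3 %| x)%Z = ((x %% 3)%Z == 0) by apply/dvdz_mod0P/eqP.
rewrite !mod3E -[((s - t) %% 3)%Z]modzDm -[((s + t) %% 3)%Z]modzDm -modzNm.
have := modz_ge0 s (isT : 3 != 0 :> int); have := ltz_pmod s (isT : 0 < 3 :> int).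
have := modz_ge0 t (isT : 3 != 0 :> int); have := ltz_pmod t (isT : 0 < 3 :> int).
move: (s %% 3)%Z (t %% 3)%Z => a b a_lt3 a_ge0 b_lt3 b_ge0.
have [->|[->|->]] : a = 0 \/ a = 1 \/ a = 2 by lia.
all: by have [->|[->|->]] : b = 0 \/ b = 1 \/ b = 2 by lia.
Qed.

Lemma admissible_sumsq2_dvd3 (s t k : int) : s = 3 * k -> primitive [:: s; t] ->
  s ^+ 2 + t ^+ 2 != 1 -> admissible_sum4sq (s ^+ 2 + t ^+ 2).
Proof.
move=> sE prim n_neq1.
have t_neq0 : t != 0.
  by apply/eqP=> t0; case/negP: (prim 3%N isT); rewrite /= sE t0 dvdz0 dvdz_mulr.
have k_neq0 : k != 0.
  apply: contraNneq n_neq1 => k0; move: prim; rewrite sE k0 mulr0 expr0n add0r.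
  move=> prim0t; apply/eqP; apply: primitive_common_dvdz prim0t _.
  by rewrite /= dvdz0 dvdzz.
exists t, (2 * k), (2 * k), k; split.
- by rewrite sumsq4 sE; ring.
- apply: primitiveW prim _ => d /and5P[dt _ _ dk _].
  by rewrite /= sE dt dvdz_mull.
- by rewrite /= mulf_eq0 (negbTE t_neq0) (negbTE k_neq0).
Qed.

Lemma admissible_sumsq2_shift3 (s t k : int) : s = t + 3 * k -> primitive [:: s; t] ->
  s ^+ 2 + t ^+ 2 != 2 -> s ^+ 2 + t ^+ 2 != 5 -> admissible_sum4sq (s ^+ 2 + t ^+ 2).
Proof.
move=> sE prim n_neq2 n_neq5.
have k_sqr1 (c e : int) : s = c * k -> t = e * k -> k ^+ 2 = 1.
  move=> sk tk; apply: primitive_common_dvdz prim _.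
  by rewrite /= sk tk !dvdz_mull.
have k_neq0 : k != 0.
  apply: contraNneq n_neq2 => k0; rewrite sE k0 mulr0 addr0.
  have t_sqr1 : t ^+ 2 = 1.
    by apply: primitive_common_dvdz prim _; rewrite /= sE k0 mulr0 addr0 dvdzz.
  by rewrite t_sqr1.
have a_neq0 : t + 2 * k != 0.
  apply: contraNneq n_neq5 => a0.
  have tE : t = - 2 * k by lia.
  have sk : s = 1 * k by lia.
  by have := k_sqr1 _ _ sk tE; rewrite sk tE; nia.
have b_neq0 : t + k != 0.
  apply: contraNneq n_neq5 => b0.
  have tE : t = - 1 * k by lia.
  have sk : s = 2 * k by lia.
  by have := k_sqr1 _ _ sk tE; rewrite sk tE; nia.
exists (t + 2 * k), (2 * k), (t + k), 0; split.
- by rewrite sumsq4 sE; ring.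
- apply: primitiveW prim _ => d /and5P[da _ db _ _].
  have dk : (d %| k)%Z by rewrite (_ : k = (t + 2 * k) - (t + k)) ?rpredB //; ring.
  have dt : (d %| t)%Z by rewrite (_ : t = (t + k) - k) ?rpredB //; ring.
  by rewrite /= sE dt rpredD ?dvdz_mull.
- by rewrite /= mulf_eq0 (negbTE a_neq0) (negbTE b_neq0) (negbTE k_neq0).
Qed.

Lemma admissible_sumsq2 (s t : int) : primitive [:: s; t] ->
  s ^+ 2 + t ^+ 2 \notin [:: 1; 2; 5] -> admissible_sum4sq (s ^+ 2 + t ^+ 2).
Proof.
rewrite !inE => prim /norP[n_neq1 /norP[n_neq2 n_neq5]].
have prim_ts : primitive [:: t; s].
  by apply: primitiveW prim _ => d /and3P[dt ds _]; rewrite /= dt ds.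
have prim_sNt : primitive [:: s; - t].
  by apply: primitiveW prim _ => d /and3P[ds dt _]; rewrite /= ds -rpredN dt.
case/or4P: (dvd3_cases s t) => /dvdzP[k kE].
- by apply: (@admissible_sumsq2_dvd3 _ _ k _ prim n_neq1); rewrite kE mulrC.
- rewrite addrC; apply: (@admissible_sumsq2_dvd3 _ _ k _ prim_ts); rewrite 1?addrC //.
  by rewrite kE mulrC.
- apply: (@admissible_sumsq2_shift3 _ _ k _ prim n_neq2 n_neq5).
  by rewrite mulrC -kE; ring.
- rewrite -(sqrrN t); apply: (@admissible_sumsq2_shift3 _ _ k _ prim_sNt); rewrite ?sqrrN //.
  by rewrite mulrC -kE; ring.
Qed.

Lemma sumsq_filter_neq0 (s : seq int) : sumsq [seq x <- s | x != 0] = sumsq s.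
Proof. by rewrite /sumsq big_filter big_rmcond // => x /negPn/eqP->; rewrite expr0n. Qed.

Lemma primitive_filter_neq0 [s : seq int] : primitive s -> primitive [seq x <- s | x != 0].
Proof.
move=> prim; apply: primitiveW prim _ => d; rewrite all_filter.
by apply: sub_all => x /=; case: eqP => [->|] //; rewrite dvdz0.
Qed.

Lemma admissible_of_primitive [n a b c d : int] :
  n = sumsq [:: a; b; c; d] -> primitive [:: a; b; c; d] -> n \notin [:: 1; 2; 5] ->
  admissible_sum4sq n.
Proof.
move=> En prim n_other.
have [few_zeros|many_zeros] := leqP (count (fun x : int => x == 0) [:: a; b; c; d]) 1.
  by exists a, b, c, d.
set s := [:: a; b; c; d] in En prim many_zeros.
have size_nz : (size [seq x <- s | x != 0%R] <= 2)%N.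
  rewrite size_filter -(@eq_count _ (predC (fun x : int => x == 0))) //.
  by have := count_predC (fun x : int => x == 0) s; rewrite (_ : size s = 4%N) //; lia.
move: (sumsq_filter_neq0 s) (primitive_filter_neq0 prim) size_nz; rewrite -En.
case: [seq x <- s | x != 0] => [|x [|y [|? ?]]] //; rewrite /sumsq ?big_cons big_nil ?addr0.
- by move=> _ /(_ 2%N isT).
- move=> nE prim_x _; move: n_other.
  by rewrite -nE (@primitive_common_dvdz _ x prim_x) //= dvdzz.
- by move=> nE prim_xy _; rewrite -nE; apply: admissible_sumsq2; rewrite // nE.
Qed.

Theorem corollary2p16 (n : nat) :
  (3 <= n)%N -> n != 5%N -> (n %% 4 != 0)%N ->
  exists a b c d : int,
    [/\ n%:Z = a ^+ 2 + b ^+ 2 + c ^+ 2 + d ^+ 2,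
        gcdz (gcdz a b) (gcdz c d) = 1
      & (count (fun x : int => x == 0) [:: a; b; c; d] <= 1)%N].
Proof.
move=> n_ge3 n_neq5 n_ndvd4.
have [a [b [c [d [En prim]]]]] := primitive_sum4sq n_ndvd4.
have n_other : n%:Z \notin [:: 1; 2; 5] by rewrite !inE; lia.
have [a' [b' [c' [d' [En' prim' zeros]]]]] := admissible_of_primitive En prim n_other.
exists a', b', c', d'; split=> //; first by rewrite En' sumsq4.
exact: primitive_gcdz.
Qed.
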